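(* Let $H$ be a finite simple graph and let $G$ be a graph obtained from $H$ by proliferating some of its leaves. If $I(H)^{[k]}$ has linear quotients, then $I(G)^{[k]}$ has linear quotients.
   Context: Graph vertices are identified with variables of a polynomial ring over a field $K$, edges with degree-2 monomials. $I(H)^{[k]}$ is the ideal generated by all products $e_1\cdots e_k$ over $k$-matchings of $H$. Proliferating a leaf: if $a$ is a leaf (vertex of degree 1) of a graph with unique neighbour $b$, one adds new vertices $a_1,\ldots,a_t$ and new edges $\{a_1,b\},\ldots,\{a_t,b\}$ (so the $a_i$ are leaves); ''proliferating some leaves'' means applying this operation to some leaves. A monomial ideal has linear quotients if its minimal generators can be ordered $u_1,\ldots,u_m$ so that $(u_1,\ldots,u_{j-1}):u_j$ is generated by variables for each $j=2,\ldots,m$. *)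

(* Monomial ideals in K[x_v : v in X] are modelled by their
   sets of monomials (exponent vectors). *)
From mathcomp Require Import all_boot.
Set Implicit Arguments. Unset Strict Implicit. Unset Printing Implicit Defensive.

Section Defs.
Variable W : finType.

Definition mono := {ffun W -> nat}.
Definition mone : mono := [ffun=> 0].
Definition mdvd (m n : mono) : bool := [forall v, m v <= n v].
Definition mmul (m n : mono) : mono := [ffun v => m v + n v].
Definition supp_in (X : {set W}) (m : mono) : bool :=
  [forall v, (m v != 0) ==> (v \in X)].

Definition simple_graph (A : {set W}) (e : rel W) : Prop :=
  (forall x, ~~ e x x) /\ (forall x y, e x y = e y x) /\
  (forall x y, e x y -> (x \in A) && (y \in A)).

(* product of the edge monomials x_{p.1} x_{p.2} over p in M *)
Definition edges_mon (M : seq (W * W)) : mono :=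
  [ffun v => \sum_(p <- M) ((p.1 == v) + (p.2 == v))].

Definition is_kmatching (e : rel W) (k : nat) (M : seq (W * W)) : Prop :=
  size M = k /\ all (fun p => e p.1 p.2) M /\
  uniq (flatten [seq [:: p.1; p.2] | p <- M]).

(* the generating set of I(H)^[k] *)
Definition matching_gens (e : rel W) (k : nat) (m : mono) : Prop :=
  exists M, is_kmatching e k M /\ m = edges_mon M.

Definition min_gen (gens : mono -> Prop) (u : mono) : Prop :=
  gens u /\ forall g, gens g -> mdvd g u -> g = u.

Definition in_ideal_seq (s : seq mono) (m : mono) : bool :=
  has (fun g => mdvd g m) s.

(* (s) : u is generated by a set S of variables of K[x_v : v in X] *)
Definition colon_gen_by_vars (X : {set W}) (s : seq mono) (u : mono) : Prop :=
  exists S : {set W}, S \subset X /\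
    forall m, supp_in X m ->
      (in_ideal_seq s (mmul m u) <-> exists2 v, v \in S & 0 < m v).

Definition linear_quotients (X : {set W}) (gens : mono -> Prop) : Prop :=
  exists s : seq mono, uniq s /\ (forall u, u \in s <-> min_gen gens u) /\
    forall j, 0 < j < size s -> colon_gen_by_vars X (take j s) (nth mone s j).

Definition prolif_step (A : {set W}) (e : rel W) (A' : {set W}) (e' : rel W)
  : Prop :=
  exists (a b : W) (N : {set W}),
    [/\ a \in A, [set y | e a y] = [set b], [disjoint N & A],
        A' = A :|: N &
        forall x y, e' x y = [|| e x y, (x \in N) && (y == b)
                              | (y \in N) && (x == b)]].

Inductive proliferated (A : {set W}) (e : rel W) : {set W} -> rel W -> Prop :=
| prolif_refl : proliferated A e A e
| prolif_more A1 e1 A2 e2 :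
    proliferated A e A1 e1 -> prolif_step A1 e1 A2 e2 -> proliferated A e A2 e2.

End Defs.

From mathcomp Require Import all_boot zify.
Set Implicit Arguments. Unset Strict Implicit. Unset Printing Implicit Defensive.

(* Let a be the proliferated leaf, b its neighbour and N the new leaves; call
   a and the vertices of N twins.  Every twin is adjacent only to b, so a
   k-matching of G covers at most one twin.  Hence collapsing the twins onto a
   maps the generators of I(G)^[k] onto those of I(H)^[k], and the generators
   above u are the u[x_a := x_c], c a twin (only u itself when x_a does not
   divide u).  Replace each u of a linear-quotient order of I(H)^[k] by this
   block, taken in the order a, then N.  If the colon ideal of u is generated
   by the variables in L, that of u[x_a := x_c] is generated by L, by N when
   a is in L (which forces x_a not to divide u, so c = a), and by the twins
   preceding c in the block. *)

Section Monomials.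
Variable W : finType.
Implicit Types (m n g u : mono W) (f h : W -> W) (s : seq (mono W)) (X : {set W}).

Lemma mdvdP m n : reflect (forall v, m v <= n v) (mdvd m n).
Proof. exact: forallP. Qed.

Lemma mmulE m n v : mmul m n v = m v + n v.
Proof. by rewrite ffunE. Qed.

Lemma mdvd_trans n m g : mdvd m n -> mdvd n g -> mdvd m g.
Proof. by move=> /mdvdP mn /mdvdP ng; apply/mdvdP => v; apply: leq_trans (mn v) (ng v). Qed.

Lemma mdvd_mul2r g m n : mdvd m n -> mdvd (mmul m g) (mmul n g).
Proof. by move=> /mdvdP mn; apply/mdvdP => v; rewrite !mmulE leq_add2r. Qed.

Lemma supp_inP X m : reflect (forall v, v \notin X -> m v = 0) (supp_in X m).
Proof.
apply: (iffP forallP) => [sm v vX | m0 v]; last first.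
  by apply/implyP; apply: contraR => /m0 ->.
by apply/eqP; apply: contraNT vX; move/implyP: (sm v).
Qed.

Definition mvar (x : W) : mono W := [ffun v => (v == x : nat)].

Lemma mvarE x v : mvar x v = (v == x).
Proof. by rewrite ffunE. Qed.

Lemma mvar_dvd m v : 0 < m v -> mdvd (mvar v) m.
Proof. by move=> mv; apply/mdvdP => w; rewrite mvarE; case: eqP => // ->. Qed.

Lemma supp_in_mvar X x : x \in X -> supp_in X (mvar x).
Proof.
by move=> xX; apply/supp_inP => v vX; rewrite mvarE; case: eqP vX => // ->; rewrite xX.
Qed.

Definition mdeg m := \sum_v m v.

Lemma mdvd_mdeg_eq g u : mdvd g u -> mdeg g = mdeg u -> g = u.
Proof.
move=> /mdvdP gu; rewrite /mdeg => deg_eq.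
have : \sum_v (u v - g v) == 0.
  rewrite -(eqn_add2l (\sum_v g v)) addn0 -big_split deg_eq.
  by apply/eqP/eq_bigr => v _ /=; rewrite subnKC.
rewrite sum_nat_eq0 => /forallP u_g; apply/ffunP => v.
by apply/eqP; rewrite eqn_leq gu -subn_eq0; apply: u_g.
Qed.

Lemma sqfree_mdvd_mulX g u v : (forall w, g w <= 1) -> 0 < u v ->
  mdvd g (mmul (mvar v) u) -> mdvd g u.
Proof.
move=> g1 uv /mdvdP gxu; apply/mdvdP => w; move: (gxu w); rewrite mmulE mvarE.
by case: eqP => [->|_ //] _; apply: leq_trans (g1 v) uv.
Qed.

Lemma in_ideal_seq_dvd s m n : in_ideal_seq s m -> mdvd m n -> in_ideal_seq s n.
Proof. by move=> /hasP [g gs gm] mn; apply/hasP; exists g => //; apply: mdvd_trans mn. Qed.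

Lemma colon_mvar_eq0 s u v :
  {in s, forall g, (forall w, g w <= 1) /\ mdeg g = mdeg u} -> u \notin s ->
  in_ideal_seq s (mmul (mvar v) u) -> u v = 0.
Proof.
move=> gens_s u_s /hasP [g gs gxu]; apply/eqP; apply: contraNT u_s; rewrite -lt0n => uv.
have [g1 deg_g] := gens_s g gs.
by rewrite -(mdvd_mdeg_eq (sqfree_mdvd_mulX g1 uv gxu) deg_g).
Qed.

Definition mmap f m : mono W := [ffun v => \sum_(x | f x == v) m x].

Lemma mmapE f m v : mmap f m v = \sum_(x | f x == v) m x.
Proof. by rewrite ffunE. Qed.

Lemma eq_mmap f h : f =1 h -> mmap f =1 mmap h.
Proof. by move=> fh m; apply/ffunP => v; rewrite !mmapE; apply: eq_bigl => x; rewrite fh. Qed.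

Lemma mmap_mul f m n : mmap f (mmul m n) = mmul (mmap f m) (mmap f n).
Proof.
by apply/ffunP => v; rewrite mmulE !mmapE -big_split; apply: eq_bigr => x _; rewrite mmulE.
Qed.

Lemma mmap_dvd f m n : mdvd m n -> mdvd (mmap f m) (mmap f n).
Proof. by move=> /mdvdP mn; apply/mdvdP => v; rewrite !mmapE; apply: leq_sum. Qed.

Lemma mmap_comp f h m : mmap h (mmap f m) = mmap (h \o f) m.
Proof.
apply/ffunP => v; rewrite !mmapE [RHS](partition_big f (fun y => h y == v)) //=.
apply: eq_bigr => y hy; rewrite mmapE; apply: eq_bigl => x.
by case: eqVneq => [->|_]; rewrite ?hy ?andbF.
Qed.

Lemma mmap_fiber1 f m v x0 : (forall x, f x = v -> m x != 0 -> x = x0) ->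
  mmap f m v = (f x0 == v) * m x0.
Proof.
move=> fib; rewrite mmapE; case: eqP => [fx0|fx0].
  rewrite (bigD1 x0) /=; last by apply/eqP.
  rewrite big1 ?addn0 ?mul1n // => x /andP [/eqP fx xx0].
  by case: (eqVneq (m x) 0) => // /(fib x fx) xx; rewrite xx eqxx in xx0.
rewrite big1 // => x /eqP fx.
by case: (eqVneq (m x) 0) => // /(fib x fx) xx; rewrite -xx in fx0.
Qed.

Lemma mmap_mvar f x : mmap f (mvar x) = mvar (f x).
Proof.
apply/ffunP => v; rewrite (@mmap_fiber1 _ _ _ x) => [|y _]; last first.
  by rewrite mvarE; case: (y =P x).
by rewrite !mvarE eqxx muln1 eq_sym.
Qed.

Lemma mmap_id_supp f m : (forall x, m x != 0 -> f x = x) -> mmap f m = m.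
Proof.
move=> fix_m; apply/ffunP => v; rewrite (@mmap_fiber1 _ _ _ v) => [|x fx mx]; last first.
  by rewrite -fx fix_m.
by have [mv0|/fix_m ->] := eqVneq (m v) 0; rewrite ?mv0 ?muln0 // eqxx mul1n.
Qed.

Lemma mmap_pos f m v : 0 < mmap f m v -> exists2 x, f x = v & 0 < m x.
Proof.
rewrite mmapE lt0n sum_nat_eq0 => /forallPn [x]; rewrite negb_imply => /andP [/eqP fx mx].
by exists x; rewrite ?lt0n.
Qed.

Lemma mmap_supp f X (Y : {set W}) m : supp_in X m -> (forall x, x \in X -> f x \in Y) ->
  supp_in Y (mmap f m).
Proof.
move=> /supp_inP mX fXY; apply/supp_inP => v vY; apply/eqP; rewrite -leqn0 leqNgt.
apply/negP => /mmap_pos [x fx mx]; have xX : x \in X by apply: contraTT mx => /mX ->.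
by rewrite -fx fXY in vY.
Qed.

Lemma mmap_le1 f m : (forall x, m x <= 1) ->
  {in [pred x | m x != 0] &, injective f} -> forall v, mmap f m v <= 1.
Proof.
move=> m1 inj_f v.
have [x0 /andP [/eqP fx0 mx0]|none] := pickP [pred x | (f x == v) && (m x != 0)].
  rewrite (@mmap_fiber1 _ _ _ x0) => [|x fx mx]; last by apply: inj_f; rewrite ?inE // fx.
  by rewrite fx0 eqxx mul1n.
rewrite (@mmap_fiber1 _ _ _ v) => [|x /eqP fx mx]; last by have := none x; rewrite /= fx mx.
by apply: leq_trans (m1 v); case: (f v == v); rewrite ?mul1n.
Qed.

End Monomials.

Lemma uniq_count_le1 (T : eqType) (s : seq T) : uniq s <-> forall x, count_mem x s <= 1.
Proof.
split=> [us x | s1]; first by rewrite count_uniq_mem ?leq_b1.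
apply: count_mem_uniq => x; have := s1 x; case: (boolP (x \in s)) => [xs|/count_memPn -> //].
by move: xs; rewrite -has_pred1 has_count; case: count => [|[]].
Qed.

Lemma sum_le1_nonzero (T : finType) (P : pred T) (F : T -> nat) x y :
  \sum_(z | P z) F z <= 1 -> P x -> P y -> F x != 0 -> F y != 0 -> x = y.
Proof.
move=> le1 Px Py Fx Fy; case: (eqVneq x y) => // xy; move: le1.
rewrite (bigD1 x) // (bigD1 y) /=; last by rewrite Py eq_sym xy.
by move: Fx Fy; rewrite -!lt0n; lia.
Qed.

Section Matchings.
Variable W : finType.
Implicit Types (M : seq (W * W)) (e : rel W) (f : W -> W) (g u : mono W).

Lemma sum_pred_eq (P : pred W) y : \sum_(x | P x) (y == x : nat) = P y.
Proof.
case Py: (P y); last by rewrite big1 // => x Px; case: eqP Py => // ->; rewrite Px.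
by rewrite (bigD1 y) //= eqxx big1 ?addn0 // => x /andP [_]; rewrite eq_sym => /negbTE ->.
Qed.

Lemma sum_edges_mon (P : pred W) M :
  \sum_(x | P x) edges_mon M x = \sum_(p <- M) (P p.1 + P p.2).
Proof.
under eq_bigr => x _ do rewrite ffunE.
rewrite exchange_big /=; apply: eq_bigr => p _.
by rewrite big_split /= !sum_pred_eq.
Qed.

Lemma mdeg_edges_mon M : mdeg (edges_mon M) = 2 * size M.
Proof.
rewrite /mdeg sum_edges_mon /=; elim: M => [|p M IH]; first by rewrite big_nil.
by rewrite big_cons IH mulnS.
Qed.

Lemma edges_mon_map f M : edges_mon [seq (f p.1, f p.2) | p <- M] = mmap f (edges_mon M).
Proof. by apply/ffunP => v; rewrite mmapE sum_edges_mon ffunE big_map. Qed.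

Lemma edges_mon_count M v :
  edges_mon M v = count_mem v (flatten [seq [:: p.1; p.2] | p <- M]).
Proof.
rewrite ffunE; elim: M => [|p M IH]; first by rewrite big_nil.
by rewrite big_cons IH /= addnA.
Qed.

Lemma uniq_matching_edges_mon M :
  uniq (flatten [seq [:: p.1; p.2] | p <- M]) <-> forall v, edges_mon M v <= 1.
Proof.
rewrite uniq_count_le1.
by split=> le1 v; [rewrite edges_mon_count | rewrite -edges_mon_count]; apply: le1.
Qed.

Lemma matching_gens_sqfree e k u : matching_gens e k u -> forall v, u v <= 1.
Proof. by move=> [M [[_ [_ /uniq_matching_edges_mon M1]] ->]]. Qed.

Lemma matching_gens_mdeg e k u : matching_gens e k u -> mdeg u = 2 * k.
Proof. by move=> [M [[<- _] ->]]; rewrite mdeg_edges_mon. Qed.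

Lemma min_gen_matching_gens e k u : min_gen (matching_gens e k) u <-> matching_gens e k u.
Proof.
split=> [[] // | gu]; split=> // g gg gu_dvd.
by apply: mdvd_mdeg_eq gu_dvd _; rewrite (matching_gens_mdeg gg) (matching_gens_mdeg gu).
Qed.

Lemma matching_gens_supp A e k u : simple_graph A e -> matching_gens e k u -> supp_in A u.
Proof.
move=> [_ [_ eA]] [M [[_ [/allP eM _]] ->]]; apply/supp_inP => v vA.
rewrite ffunE big1_seq // => p /andP [_ /eM /eA /andP [p1A p2A]].
by apply/eqP; rewrite addn_eq0 !eqb0; apply/andP; split; apply: contraNN vA => /eqP <-.
Qed.

Lemma matching_gens_mmap e e' k M f : is_kmatching e k M ->
  {in M, forall p, e' (f p.1) (f p.2)} ->
  {in [pred x | edges_mon M x != 0] &, injective f} ->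
  matching_gens e' k (mmap f (edges_mon M)).
Proof.
move=> [sM [_ /uniq_matching_edges_mon M1]] fe' f_inj.
exists [seq (f p.1, f p.2) | p <- M]; split; last by rewrite edges_mon_map.
split; first by rewrite size_map.
split; first by apply/allP => _ /mapP [p pM ->]; apply: fe'.
by apply/uniq_matching_edges_mon; rewrite edges_mon_map; apply: mmap_le1.
Qed.

End Matchings.

Section Splits.
Variables S T : Type.

Lemma cat_cons_split (u v P Q : seq T) y : u ++ v = P ++ y :: Q ->
  (exists b, u = P ++ y :: b) \/ (exists P', P = u ++ P' /\ v = P' ++ y :: Q).
Proof.
elim: u P => [|x u IH] [|z P] //= uvE; try by right; exists (z :: P).
- by right; exists [::].
- by case: uvE => <- _; left; exists u.
case: uvE => <- /IH [[b ->]|[P' [-> ->]]]; first by left; exists b.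
by right; exists P'.
Qed.

Lemma map_split (f : S -> T) s P y Q : map f s = P ++ y :: Q ->
  exists s1 x s2, [/\ s = s1 ++ x :: s2, P = map f s1 & y = f x].
Proof.
elim: P s => [|z P IH] [|x s] //= [fxE sE]; first by exists [::], x, s.
have [s1 [x' [s2 [-> -> ->]]]] := IH s sE.
by exists (x :: s1), x', s2; rewrite /= fxE.
Qed.

Lemma flatten_map_split (f : S -> seq T) s P y Q : flatten (map f s) = P ++ y :: Q ->
  exists s1 x s2 b1 b2,
    [/\ s = s1 ++ x :: s2, f x = b1 ++ y :: b2 & P = flatten (map f s1) ++ b1].
Proof.
elim: s P => [|x s IH] P /=; first by case: P.
move=> /cat_cons_split [[b2 fxE]|[P' [-> /IH [s1 [x' [s2 [b1 [b2' [-> fx'E ->]]]]]]]]].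
  by exists [::], x, s, P, b2.
by exists (x :: s1), x', s2, b1, b2'; rewrite catA.
Qed.

End Splits.

Section LinearQuotients.
Variable W : finType.

Lemma colon_gen_by_vars_nil (X : {set W}) u : colon_gen_by_vars X [::] u.
Proof. by exists set0; split=> [|m _]; [apply: sub0set | split=> // [[v]]; rewrite inE]. Qed.

Lemma linear_quotientsE (X : {set W}) (gens : mono W -> Prop) :
  linear_quotients X gens <-> exists s : seq (mono W),
    [/\ uniq s, forall u, u \in s <-> min_gen gens u &
        forall s1 u s2, s = s1 ++ u :: s2 -> colon_gen_by_vars X s1 u].
Proof.
split=> [[s [us [gs lq]]] | [s [us gs lq]]]; exists s; do 2?split=> //.
  move=> [|x s1] u s2 sE; first exact: colon_gen_by_vars_nil.
  have := lq (size (x :: s1)); rewrite sE take_size_cat // nth_cat ltnn subnn.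
  by apply; rewrite size_cat /= addnS ltnS leq_addr.
move=> j /andP [j0 js]; apply: (lq _ _ (drop j.+1 s)).
by rewrite -drop_nth // cat_take_drop.
Qed.

End LinearQuotients.

Section ProliferationStep.
Variables (W : finType) (A : {set W}) (e : rel W) (a b : W) (N A' : {set W}) (e' : rel W).
Hypothesis simple_e : simple_graph A e.
Hypothesis a_in_A : a \in A.
Hypothesis nbr_a : [set y | e a y] = [set b].
Hypothesis disj_N_A : [disjoint N & A].
Hypothesis A'E : A' = A :|: N.
Hypothesis e'E : forall x y,
  e' x y = [|| e x y, (x \in N) && (y == b) | (y \in N) && (x == b)].
Implicit Types (u m g : mono W) (s : seq (mono W)).

Lemma e_a y : e a y = (y == b).
Proof. by have := congr1 (fun B : {set W} => y \in B) nbr_a; rewrite /= !inE. Qed.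

Lemma e_sym x y : e x y = e y x.
Proof. by case: simple_e => _ []. Qed.

Lemma edge_in_A x y : e x y -> (x \in A) && (y \in A).
Proof. by case: simple_e => _ [_]; apply. Qed.

Lemma b_in_A : b \in A.
Proof. by have /edge_in_A /andP [] : e a b by rewrite e_a. Qed.

Lemma N_notin_A x : x \in N -> x \notin A.
Proof. by move=> xN; rewrite (disjointFr disj_N_A xN). Qed.

Lemma a_notin_N : a \notin N.
Proof. by apply: contraL a_in_A; apply: N_notin_A. Qed.

Lemma b_notin_N : b \notin N.
Proof. by apply: contraL b_in_A; apply: N_notin_A. Qed.

Lemma a_neq_b : a != b.
Proof. by apply: contraNneq (proj1 simple_e a) => {2}->; rewrite e_a. Qed.

Definition twins := a |: N.

Lemma in_twins x : (x \in twins) = (x == a) || (x \in N).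
Proof. by rewrite !inE. Qed.

Lemma twin_in_A x : x \in twins -> x \in A -> x = a.
Proof. by rewrite in_twins => /orP [/eqP //|/N_notin_A /negPf ->]. Qed.

Lemma twin_notin_A x : x \in twins -> x != a -> x \notin A.
Proof. by move=> xT; apply: contra => xA; rewrite (twin_in_A xT xA). Qed.

Lemma b_notin_twins : b \notin twins.
Proof. by rewrite in_twins negb_or eq_sym a_neq_b b_notin_N. Qed.

Lemma e'_twin x y : x \in twins -> e' x y = (y == b).
Proof.
rewrite e'E in_twins => /orP [/eqP ->|xN].
  by rewrite e_a (negPf a_notin_N) (negPf a_neq_b) andbF /= !orbF.
have xb : (x == b) = false by apply: contraNF b_notin_N => /eqP <-.
rewrite xN xb andbF orbF; case: (boolP (e x y)) => // /edge_in_A /andP [xA _].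
by have := N_notin_A xN; rewrite xA.
Qed.

Lemma e'_sym x y : e' x y = e' y x.
Proof. by rewrite !e'E e_sym orbCA orbC orbA. Qed.

Lemma simple_e' : simple_graph A' e'.
Proof.
split; [|split].
- move=> x; rewrite e'E (negPf (proj1 simple_e x)) orbb /=.
  by apply/andP => [[xN /eqP xb]]; have := b_notin_N; rewrite -xb xN.
- exact: e'_sym.
- move=> x y; rewrite e'E A'E !inE.
  case/or3P => [/edge_in_A /andP [-> ->] //|/andP [-> /eqP ->]|/andP [-> /eqP ->]];
  by rewrite b_in_A !orbT.
Qed.

Definition fold_twins x := if x \in N then a else x.
Definition to_twin c x := if x == a then c else x.

Lemma e'_fold x y : e' x y -> e (fold_twins x) (fold_twins y).
Proof.
rewrite /fold_twins; have twinN z : z \in N -> z \in twins by rewrite in_twins orbC => ->.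
case: ifP => [/twinN xT|xN].
  by rewrite e'_twin // => /eqP ->; rewrite (negPf b_notin_N) e_a.
case: ifP => [/twinN yT|yN].
  by rewrite e'_sym e'_twin // => /eqP ->; rewrite e_sym e_a.
by rewrite e'E xN yN /= !orbF.
Qed.

Lemma e_to_twin c x y : c \in twins -> e x y -> e' (to_twin c x) (to_twin c y).
Proof.
move=> cT; rewrite /to_twin.
case: (eqVneq x a) => [->|xa].
  by rewrite e_a => /eqP ->; rewrite eq_sym (negPf a_neq_b) e'_twin.
case: (eqVneq y a) => [->|ya].
  by rewrite e_sym e_a => /eqP ->; rewrite e'_sym e'_twin.
by rewrite e'E => ->.
Qed.

Lemma to_twin_inj c : c \in twins -> {in A &, injective (to_twin c)}.
Proof.
move=> cT x y xA yA; rewrite /to_twin.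
case: (eqVneq x a) => [->|xa]; case: (eqVneq y a) => [->|ya] //.
  by move=> cy; subst y; rewrite (twin_in_A cT yA).
by move=> xc; subst x; rewrite (twin_in_A cT xA) eqxx in xa.
Qed.

Lemma fold_to_twin c : c \in twins -> fold_twins \o to_twin c =1 fold_twins.
Proof.
move=> cT x; rewrite /fold_twins /to_twin /=; case: eqP => [->|//].
rewrite (negPf a_notin_N); move: cT; rewrite in_twins.
by case/orP => [/eqP ->|->]; rewrite ?(negPf a_notin_N).
Qed.

Lemma mmap_fold_id u : supp_in A u -> mmap fold_twins u = u.
Proof.
move=> /supp_inP uA; apply: mmap_id_supp => x ux; rewrite /fold_twins.
by case: ifP => // /N_notin_A /uA ux0; rewrite ux0 eqxx in ux.
Qed.

Lemma mmap_fold_to_twin c u : c \in twins -> supp_in A u ->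
  mmap fold_twins (mmap (to_twin c) u) = u.
Proof. by move=> cT uA; rewrite mmap_comp (eq_mmap (fold_to_twin cT)) mmap_fold_id. Qed.

Lemma mmap_to_twin_id c u : u a = 0 -> mmap (to_twin c) u = u.
Proof.
by move=> ua; apply: mmap_id_supp => x; rewrite /to_twin; case: (x =P a) => // ->; rewrite ua.
Qed.

Lemma mmap_to_twinE c u v : c \in twins -> supp_in A u ->
  mmap (to_twin c) u v = if v == c then u a else if v == a then 0 else u v.
Proof.
move=> cT /supp_inP uA; rewrite /to_twin.
have uc : c != a -> u c = 0 by move=> ca; apply/uA/twin_notin_A.
case: (eqVneq v c) => [->|vc].
  rewrite (@mmap_fiber1 _ _ _ _ a) ?eqxx ?mul1n // => x; case: eqP => // _ -> cx.
  by apply/eqP; apply: contraNT cx => ca; rewrite uc.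
rewrite (@mmap_fiber1 _ _ _ _ v) => [|x]; last first.
  by case: eqP => [_ cv|_ -> //]; rewrite cv eqxx in vc.
case: (eqVneq v a) => [va|_]; first by subst v; rewrite eq_sym (negPf vc).
by rewrite eqxx mul1n.
Qed.

Lemma supp_mmap_fold m : supp_in A' m -> supp_in A (mmap fold_twins m).
Proof.
move=> mA'; apply: mmap_supp mA' _ => x; rewrite A'E inE /fold_twins.
by case: ifP => // _; rewrite orbF.
Qed.

Lemma twins_edge x y : e' x y -> (x \in twins) + (y \in twins) <= (x == b) + (y == b).
Proof.
case: (boolP (x \in twins)) => xT.
  by rewrite e'_twin // => /eqP ->; rewrite (negPf b_notin_twins) eqxx; lia.
case: (boolP (y \in twins)) => yT //; rewrite e'_sym e'_twin // => /eqP ->.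
by rewrite eqxx; lia.
Qed.

Lemma twins_covered_once k g : matching_gens e' k g ->
  forall x y, x \in twins -> y \in twins -> g x != 0 -> g y != 0 -> x = y.
Proof.
move=> [M [[_ [/allP eM /uniq_matching_edges_mon M1]] ->]] x y xT yT.
apply: (@sum_le1_nonzero _ (fun z => z \in twins)) => //; apply: leq_trans (M1 b).
rewrite sum_edges_mon ffunE !big_seq; apply: leq_sum => p pM.
exact: twins_edge (eM p pM).
Qed.

Lemma matching_gens_fold k g : matching_gens e' k g -> matching_gens e k (mmap fold_twins g).
Proof.
move=> gg; have once := twins_covered_once gg.
case: gg => M [kM gE]; rewrite gE; apply: (matching_gens_mmap kM).
  by case: kM => _ [/allP eM _] p /eM; apply: e'_fold.
have twinN z : z \in N -> z \in twins by rewrite in_twins orbC => ->.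
have twina : a \in twins by rewrite in_twins eqxx.
move=> x y; rewrite !inE -gE /fold_twins => gx gy.
case: ifP => [/twinN xT|_]; case: ifP => [/twinN yT|_] //.
- by move=> _; apply: once.
- by move=> ay; subst y; apply: once.
- by move=> xa; subst x; apply: once.
Qed.

Lemma matching_gens_to_twin k u c : matching_gens e k u -> c \in twins ->
  matching_gens e' k (mmap (to_twin c) u).
Proof.
move=> gu cT; have /supp_inP uA := matching_gens_supp simple_e gu.
case: gu => M [kM uE]; rewrite uE; apply: (matching_gens_mmap kM).
  by case: kM => _ [/allP eM _] p /eM; apply: e_to_twin.
move=> x y; rewrite !inE -uE => ux uy; apply: (to_twin_inj cT).
  by apply: contraR ux => /uA ->.
by apply: contraR uy => /uA ->.
Qed.

Lemma matching_gens_prolifE k g : matching_gens e' k g <->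
  exists u c, [/\ matching_gens e k u, c \in twins & g = mmap (to_twin c) u].
Proof.
split=> [gg | [u [c [gu cT ->]]]]; last exact: matching_gens_to_twin.
have [d dT gd] : exists2 d, d \in twins & forall x, x \in twins -> g x != 0 -> x = d.
  case: (pickP [pred x | (x \in twins) && (g x != 0)]) => [d /andP [dT gd] | none].
    by exists d => // x xT gx; apply: (twins_covered_once gg).
  by exists a => [|x xT gx]; [rewrite in_twins eqxx | have := none x; rewrite /= xT gx].
exists (mmap fold_twins g), d; split=> //; first exact: matching_gens_fold.
rewrite mmap_comp mmap_id_supp // => x gx /=; rewrite /to_twin /fold_twins.
case: (boolP (x \in N)) => xN.
  by rewrite eqxx; apply/esym/gd; rewrite // in_twins xN orbT.
by case: (x =P a) => [xa|//]; apply/esym/gd; rewrite // in_twins xa eqxx.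
Qed.

Definition twin_seq u := if u a == 0 then [:: a] else a :: enum N.
Definition block u := [seq mmap (to_twin c) u | c <- twin_seq u].

Lemma twin_seq_uniq u : uniq (twin_seq u).
Proof. by rewrite /twin_seq; case: ifP => //= _; rewrite mem_enum a_notin_N enum_uniq. Qed.

Lemma twin_seq_sub u : {subset twin_seq u <= twins}.
Proof.
by move=> x; rewrite /twin_seq in_twins; case: ifP => _; rewrite !inE ?mem_enum // => ->.
Qed.

Lemma twin_seq_eq0 u : u a = 0 -> twin_seq u = [:: a].
Proof. by rewrite /twin_seq => ->. Qed.

Lemma mem_block u g : supp_in A u ->
  g \in block u <-> exists2 c, c \in twins & g = mmap (to_twin c) u.
Proof.
move=> uA; split=> [/mapP [c /twin_seq_sub cT ->] | [c cT ->]]; first by exists c.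
rewrite /block /twin_seq; case: eqP => [ua|_]; first by rewrite /= !mmap_to_twin_id // inE.
by apply: (map_f (fun c0 => mmap (to_twin c0) u)); move: cT; rewrite in_twins inE mem_enum.
Qed.

Lemma block_inj u c c' : supp_in A u -> c \in twin_seq u -> c' \in twin_seq u ->
  mmap (to_twin c) u = mmap (to_twin c') u -> c = c'.
Proof.
move=> uA cs c's; have cT := twin_seq_sub cs.
have u_a0_head : u a = 0 -> c = c'.
  by move=> /twin_seq_eq0 tE; move: cs c's; rewrite tE !inE => /eqP -> /eqP ->.
move/(congr1 (fun m => m c)); rewrite !mmap_to_twinE ?(twin_seq_sub c's) // eqxx.
case: (eqVneq c c') => // _; case: (eqVneq c a) => [_|ca]; first exact: u_a0_head.
by rewrite (supp_inP _ _ uA c (twin_notin_A cT ca)); apply: u_a0_head.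
Qed.

Lemma blocks_uniq s : uniq s -> {in s, forall u, supp_in A u} ->
  uniq (flatten (map block s)).
Proof.
move=> us sA.
apply: (@allpairs_uniq_dep _ _ _ (fun u c => mmap (to_twin c) u) s twin_seq) => //.
  by move=> u _; apply: twin_seq_uniq.
move=> _ _ /allpairsPdep [u [c [us' cs ->]]] /allpairsPdep [u' [c' [us'' c's ->]]] /= E.
have uu' : u = u'.
  rewrite -(mmap_fold_to_twin (twin_seq_sub cs) (sA u us')) E.
  by rewrite mmap_fold_to_twin ?(twin_seq_sub c's) ?sA.
subst u'; by rewrite (block_inj (sA u us') cs c's E).
Qed.

Lemma in_blocks_fold s m : {in s, forall u, supp_in A u} ->
  in_ideal_seq (flatten (map block s)) m -> in_ideal_seq s (mmap fold_twins m).
Proof.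
move=> sA /hasP [h /flatten_mapP [u us /(mem_block _ (sA u us)) [c cT ->]] hm].
by apply/hasP; exists u => //; rewrite -(mmap_fold_to_twin cT (sA u us)); apply: mmap_dvd.
Qed.

Lemma in_blocks_to_twin s m c : {in s, forall u, supp_in A u} -> c \in twins ->
  in_ideal_seq s m -> in_ideal_seq (flatten (map block s)) (mmap (to_twin c) m).
Proof.
move=> sA cT /hasP [u us um]; apply/hasP; exists (mmap (to_twin c) u); last exact: mmap_dvd.
by apply/flatten_mapP; exists u => //; apply/(mem_block _ (sA u us)); exists c.
Qed.

Section BlockColon.
Variables (k : nat) (s1 : seq (mono W)) (u : mono W) (L : {set W}) (cs1 cs2 : seq W) (c : W).
Hypothesis gens_s1 : {in s1, forall g, matching_gens e k g}.
Hypothesis gens_u : matching_gens e k u.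
Hypothesis u_notin_s1 : u \notin s1.
Hypothesis L_sub_A : L \subset A.
Hypothesis colon_L : forall m, supp_in A m ->
  in_ideal_seq s1 (mmul m u) <-> exists2 v, v \in L & 0 < m v.
Hypothesis twin_seq_u : twin_seq u = cs1 ++ c :: cs2.

Let supp_s1 : {in s1, forall g, supp_in A g}.
Proof. by move=> g /gens_s1 /(matching_gens_supp simple_e). Qed.

Let supp_u : supp_in A u.
Proof. exact: matching_gens_supp simple_e gens_u. Qed.

Let u_twin x : x \in twins -> x != a -> u x = 0.
Proof. by move=> xT xa; apply: (supp_inP _ _ supp_u); apply: twin_notin_A. Qed.

Let c_twin : c \in twins.
Proof. by apply: (@twin_seq_sub u); rewrite twin_seq_u mem_cat mem_head orbT. Qed.

Let cs1_twins : {subset cs1 <= twins}.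
Proof. by move=> x xcs; apply: (@twin_seq_sub u); rewrite twin_seq_u mem_cat xcs. Qed.

Let c_notin_cs1 : c \notin cs1.
Proof. by have := twin_seq_uniq u; rewrite twin_seq_u cat_uniq /= => /and3P [_ /norP []]. Qed.

Let u_a0_head : u a = 0 -> cs1 = [::] /\ c = a.
Proof. by move=> /twin_seq_eq0; rewrite twin_seq_u; case: cs1 => [[->]|? [|? ?] []]. Qed.

Let mvar_colon v : v \in L -> in_ideal_seq s1 (mmul (mvar v) u).
Proof.
move=> vL; apply/(colon_L (supp_in_mvar (subsetP L_sub_A v vL))).
by exists v; rewrite // mvarE eqxx.
Qed.

Let a_in_L_u_a0 : a \in L -> u a = 0.
Proof.
move=> /mvar_colon; apply: colon_mvar_eq0 u_notin_s1 => g /gens_s1 gg.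
rewrite (matching_gens_mdeg gg) (matching_gens_mdeg gens_u).
by split=> //; apply: matching_gens_sqfree gg.
Qed.

Definition colon_vars := L :|: (if a \in L then N else set0) :|: [set x in cs1].

Lemma colon_vars_sub : colon_vars \subset A'.
Proof.
apply/subsetP => x; rewrite A'E !inE => /orP [/orP [xL|]|xcs].
- by rewrite (subsetP L_sub_A x xL).
- by case: ifP => _; rewrite ?inE // => ->; rewrite orbT.
- by move: (cs1_twins xcs); rewrite in_twins => /orP [/eqP ->|->]; rewrite ?a_in_A ?orbT.
Qed.

Lemma colon_vars_of_prefix m : supp_in A' m ->
  in_ideal_seq (flatten (map block s1) ++ [seq mmap (to_twin c') u | c' <- cs1])
    (mmul m (mmap (to_twin c) u)) ->
  exists2 v, v \in colon_vars & 0 < m v.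
Proof.
move=> mA'; rewrite /in_ideal_seq has_cat => /orP [/(in_blocks_fold supp_s1) | /hasP [h]].
  rewrite mmap_mul mmap_fold_to_twin // => /(colon_L (supp_mmap_fold mA')) [v vL].
  move=> /mmap_pos [x xv mx]; exists x => //; move: xv; rewrite /fold_twins.
  by case: ifP => xN xv; subst v; rewrite !inE ?vL ?xN ?orbT.
move=> /mapP [c' c's ->] /mdvdP /(_ c') hc'; exists c'; first by rewrite !inE c's orbT.
have c'c : c' != c by apply: contraNneq c_notin_cs1 => <-.
have ua : 0 < u a by rewrite lt0n; apply/eqP => /u_a0_head [cs1E _]; rewrite cs1E in c's.
move: hc'; rewrite mmulE !mmap_to_twinE ?c_twin ?cs1_twins // eqxx (negPf c'c).
case: (eqVneq c' a) => [_|c'a]; first by rewrite addn0; lia.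
by rewrite (u_twin (cs1_twins c's) c'a) addn0; lia.
Qed.

Lemma prefix_of_colon_vars v : v \in colon_vars ->
  in_ideal_seq (flatten (map block s1) ++ [seq mmap (to_twin c') u | c' <- cs1])
    (mmul (mvar v) (mmap (to_twin c) u)).
Proof.
rewrite /in_ideal_seq has_cat !inE => /orP [/orP [vL|] | vcs].
- have tv : to_twin c v = v.
    by rewrite /to_twin; case: eqP => // va; rewrite va in vL; have [_ ->] := u_a0_head (a_in_L_u_a0 vL).
  rewrite -[in mvar v]tv -mmap_mvar -mmap_mul; apply/orP; left.
  exact: in_blocks_to_twin supp_s1 c_twin (mvar_colon vL).
- case: ifP => [aL|_]; last by rewrite inE.
  move=> vN; have vT : v \in twins by rewrite in_twins vN orbT.
  have [_ ->] := u_a0_head (a_in_L_u_a0 aL); rewrite mmap_to_twin_id ?a_in_L_u_a0 //.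
  have -> : mmul (mvar v) u = mmap (to_twin v) (mmul (mvar a) u).
    by rewrite mmap_mul mmap_mvar mmap_to_twin_id ?a_in_L_u_a0 // /to_twin eqxx.
  apply/orP; left; exact: in_blocks_to_twin supp_s1 vT (mvar_colon aL).
have ua1 : u a = 1.
  apply/eqP; rewrite eqn_leq (matching_gens_sqfree gens_u) lt0n.
  by apply/eqP => /u_a0_head [cs1E _]; rewrite cs1E in vcs.
apply/orP; right; apply/hasP; exists (mmap (to_twin v) u); first exact: map_f.
apply/mdvdP => w; rewrite mmulE mvarE !mmap_to_twinE ?c_twin ?cs1_twins //.
case: (eqVneq w v) => [_|_]; first by rewrite ua1.
case: (eqVneq w a) => // wa; case: (eqVneq w c) => [wc|_]; last by rewrite add0n.
by rewrite wc u_twin // -wc.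
Qed.

Lemma colon_block : colon_gen_by_vars A'
  (flatten (map block s1) ++ [seq mmap (to_twin c') u | c' <- cs1]) (mmap (to_twin c) u).
Proof.
exists colon_vars; split=> [|m mA']; first exact: colon_vars_sub.
split; first exact: colon_vars_of_prefix.
case=> v vS mv; apply: in_ideal_seq_dvd (prefix_of_colon_vars vS) _.
exact/mdvd_mul2r/mvar_dvd.
Qed.

End BlockColon.

Lemma linear_quotients_step k :
  linear_quotients A (matching_gens e k) -> linear_quotients A' (matching_gens e' k).
Proof.
move=> /linear_quotientsE [s [us gs lq]]; apply/linear_quotientsE.
have gens_s u : u \in s <-> matching_gens e k u by rewrite gs min_gen_matching_gens.
have supp_s : {in s, forall u, supp_in A u}.
  by move=> u /gens_s /(matching_gens_supp simple_e).
exists (flatten (map block s)); split; first exact: blocks_uniq.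
  move=> g; rewrite min_gen_matching_gens matching_gens_prolifE; split.
    move=> /flatten_mapP [u us' /(mem_block _ (supp_s u us')) [c cT ->]].
    by exists u, c; split=> //; apply/gens_s.
  case=> u [c [gu cT ->]]; apply/flatten_mapP; exists u; first exact/gens_s.
  by apply/(mem_block _ (matching_gens_supp simple_e gu)); exists c.
move=> P g Q /(@flatten_map_split _ _ block) [s1 [u [s2 [b1 [b2 [sE bE ->]]]]]].
have [cs1 [c [cs2 [tE -> ->]]]] := map_split bE.
have [L [LA HL]] := lq _ _ _ sE.
apply: (colon_block (k := k) _ _ _ LA HL tE).
- by move=> h hs1; apply/gens_s; rewrite sE mem_cat hs1.
- by apply/gens_s; rewrite sE mem_cat mem_head orbT.
- by move: us; rewrite sE cat_uniq => /and3P [_ /hasPn /(_ u (mem_head _ _))].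
Qed.

End ProliferationStep.

Lemma proliferated_simple (W : finType) (A : {set W}) (e : rel W) A' e' :
  simple_graph A e -> proliferated A e A' e' -> simple_graph A' e'.
Proof.
move=> simple_e; elim=> // A1 e1 A2 e2 _ simple1 [a [b [N [_ nbr_a disj A2E e2E]]]].
exact: simple_e' simple1 nbr_a disj A2E e2E.
Qed.

Theorem corollary5p2 (W : finType) (A : {set W}) (e : rel W)
  (A' : {set W}) (e' : rel W) (k : nat) :
  simple_graph A e -> proliferated A e A' e' ->
  linear_quotients A (matching_gens e k) ->
  linear_quotients A' (matching_gens e' k).
Proof.
move=> simple_e prolif; elim: prolif => // A1 e1 A2 e2 prolif1 IH.
move=> [a [b [N [a_in nbr_a disj A2E e2E]]]] /IH.
exact: (linear_quotients_step (proliferated_simple simple_e prolif1) a_in nbr_a disj A2E e2E).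
Qed.
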